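(* Let $\mathcal{L}_2\subset\mathbb{P}^2_{\mathbb{R}}$ be the arrangement of $12$ lines defined by \begin{multline*} Q_2=xy(x-y)(x+y-z)(x-z)(y-z)\big(x+(1-\sqrt2)z\big)\big(y+(\sqrt2-2)z\big)\big(x+\sqrt2y+(1-\sqrt2)z\big)\\ \Big(x-\sqrt2z+\tfrac{\sqrt2}{2}y\Big)\big(x+(\sqrt2+1)y-\sqrt2z\big)\big(x+(\sqrt2-1)y+(2-2\sqrt2)z\big). \end{multline*} Then the real realization space of the matroid of $\mathcal{L}_2$ is zero-dimensional.
   Context: The matroid of a line arrangement $\{H_1,\dots,H_n\}\subset\mathbb{P}^2_{\mathbb{F}}$ is the rank-$3$ matroid on $[n]$ whose bases are the $3$-subsets $\{i,j,k\}$ with $H_i\cap H_j\cap H_k=\emptyset$ (equivalently, it encodes the intersection lattice). For a matroid $M$ realizable over $\mathbb{F}$, its realization space $\mathcal{R}(M;\mathbb{F})$ is the set of all arrangements of $n$ distinct lines in $\mathbb{P}^2_{\mathbb{F}}$ (with lines labeled by $[n]$) realizing $M$, modulo the action of $\mathrm{PGL}(3;\mathbb{F})$; its dimension is meant here. *)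

From HB Require Import structures.
From mathcomp Require Import all_boot all_order all_algebra.
From mathcomp Require Import reals.
Set Implicit Arguments. Unset Strict Implicit. Unset Printing Implicit Defensive.
Import Order.TTheory GRing.Theory Num.Theory.
Local Open Scope ring_scope.

(* A line  a x + b y + c z = 0  in P^2_R is represented by its coefficient
   row vector (a, b, c) (nonzero, determined up to a nonzero scalar). *)
Definition vec3 {R : pzRingType} (a b c : R) : 'rV[R]_3 :=
  \row_(j < 3) nth 0 [:: a; b; c] j.

Definition det3 {R : comPzRingType} (u v w : 'rV[R]_3) : R :=
  \det (\matrix_(i < 3, j < 3) (nth u [:: u; v; w] i) 0 j).

Definition is_arrangement {R : fieldType} (n : nat) (f : 'I_n -> 'rV[R]_3) : Prop :=
  forall i j : 'I_n, i != j -> \rank (col_mx (f i) (f j)) = 2%N.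

(* the rank-3 matroid of an arrangement, given by its set of bases:
   3-subsets {i,j,k} with H_i ∩ H_j ∩ H_k = ∅, i.e. det of coefficients <> 0 *)
Definition matroid_bases {R : fieldType} (n : nat) (f : 'I_n -> 'rV[R]_3)
  : {set {set 'I_n}} :=
  [set B : {set 'I_n} | (#|B| == 3)%N &&
     [exists i, exists j, exists k,
        (B == [set i; j; k]) && (det3 (f i) (f j) (f k) != 0)]].

Definition realizes {R : fieldType} (n : nat) (M : {set {set 'I_n}})
  (f : 'I_n -> 'rV[R]_3) : Prop :=
  is_arrangement f /\ matroid_bases f = M.

(* f and g are the same point of the realization space: they differ by a
   projective transformation (PGL(3)) and rescaling of each line equation. *)
Definition pgl_equiv {R : fieldType} (n : nat) (f g : 'I_n -> 'rV[R]_3) : Prop :=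
  exists A : 'M[R]_3, A \in unitmx /\
  exists c : 'I_n -> R, (forall i, c i != 0) /\
    forall i, g i = c i *: (f i *m A).

(* The realization space R(M;F) = {realizations}/PGL(3) is zero-dimensional:
   as a semialgebraic set this means it is finite and nonempty, i.e. finitely
   many (and at least one) PGL-orbits of realizations. *)
Definition realization_space_zero_dim {R : fieldType} (n : nat)
  (M : {set {set 'I_n}}) : Prop :=
  exists (m : nat) (F : 'I_m -> 'I_n -> 'rV[R]_3),
    (0 < m)%N /\ (forall t, realizes M (F t)) /\
    (forall g, realizes M g -> exists t, pgl_equiv (F t) g).

Definition L2_list (R : realType) : seq 'rV[R]_3 :=
  let s := Num.sqrt (2 : R) in
  [:: vec3 1 0 0;
      vec3 0 1 0;
      vec3 1 (-1) 0;
      vec3 1 1 (-1);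
      vec3 1 0 (-1);
      vec3 0 1 (-1);
      vec3 1 0 (1 - s);
      vec3 0 1 (s - 2);
      vec3 1 s (1 - s);
      vec3 1 (s / 2) (- s);
      vec3 1 (s + 1) (- s);
      vec3 1 (s - 1) (2 - 2 * s)].

Definition L2 (R : realType) : 'I_12 -> 'rV[R]_3 :=
  fun i => nth 0 (L2_list R) i.

(* Lines 0, 1, 4, 5 of L2 are in general position, so in any realization a projective
   transformation sends them to x, y, z and x + y + z.  Line 7 passes through the point
   where lines 1 and 5 meet, hence becomes x + t y + z with t <> 0, 1; each remaining line
   then joins two already determined intersection points, which gives the normal form
   [L2_normal t].  The last incidence, lines 9, 4, 7 concurrent, forces
   t (2 t^2 - 4 t + 1) = 0, so t = 1 +- sqrt 2 / 2 and there are at most two classes of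
   realizations.  That L2 itself is a realization, and which triples of its lines are
   concurrent, is decided by exact computation in Q(sqrt 2), using that sqrt 2 is
   irrational. *)

From HB Require Import structures.
From mathcomp Require Import all_boot all_order all_algebra.
From mathcomp Require Import reals ring.
From Stdlib Require Import Classical.
Set Implicit Arguments. Unset Strict Implicit. Unset Printing Implicit Defensive.
Import Order.TTheory GRing.Theory Num.Theory.
Local Open Scope ring_scope.

Section Plane.
Variable R : fieldType.
Implicit Types (a b c d u v w x y z : 'rV[R]_3) (A : 'M[R]_3).

(* Only meaningful for k < 3: [inord] reads larger k as 0. *)
Definition coord3 x (k : nat) : R := x 0 (inord k).

Lemma coord3_vec3 (p q r : R) k :
  (k < 3)%N -> coord3 (vec3 p q r) k = nth 0 [:: p; q; r] k.
Proof. by move=> k_lt3; rewrite /coord3 mxE inordK. Qed.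

Lemma coord3Z (l : R) x k : coord3 (l *: x) k = l * coord3 x k.
Proof. by rewrite /coord3 mxE. Qed.

Lemma coord3_ord x (k : 'I_3) : x 0 k = coord3 x k.
Proof. by rewrite /coord3 inord_val. Qed.

Lemma vec3_coord3 x : x = vec3 (coord3 x 0) (coord3 x 1) (coord3 x 2).
Proof.
by apply/rowP => -[[|[|[|//]]] k_lt3]; rewrite !mxE /coord3 /=;
  congr (x _ _); apply: val_inj; rewrite /= inordK.
Qed.

Lemma scale_vec3 (l p q r : R) : l *: vec3 p q r = vec3 (l * p) (l * q) (l * r).
Proof. by apply/rowP => -[[|[|[|//]]] ?]; rewrite !mxE. Qed.

Lemma vec3_eq0 (p q r : R) : (vec3 p q r == 0) = [&& p == 0, q == 0 & r == 0].
Proof.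
apply/eqP/and3P => [/rowP E | [/eqP-> /eqP-> /eqP->]].
  by split; apply/eqP; [move: (E 0) | move: (E 1) | move: (E 2)]; rewrite !mxE.
by apply/rowP => -[[|[|[|//]]] ?]; rewrite !mxE.
Qed.

Definition mx3 (f : nat -> nat -> R) : 'M[R]_3 := \matrix_(i, j) f i j.

Lemma det_mx3 f : \det (mx3 f) =
    f 0 0 * (f 1 1 * f 2 2 - f 1 2 * f 2 1)
  - f 0 1 * (f 1 0 * f 2 2 - f 1 2 * f 2 0)
  + f 0 2 * (f 1 0 * f 2 1 - f 1 1 * f 2 0).
Proof.
rewrite (expand_det_row _ ord0) !big_ord_recl big_ord0 /cofactor.
rewrite !(expand_det_row _ ord0) !big_ord_recl !big_ord0 /cofactor.
rewrite !det_mx11 !mxE /= !expr0 !expr1 /=; ring.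
Qed.

Lemma det3E u v w : det3 u v w =
    coord3 u 0 * (coord3 v 1 * coord3 w 2 - coord3 v 2 * coord3 w 1)
  - coord3 u 1 * (coord3 v 0 * coord3 w 2 - coord3 v 2 * coord3 w 0)
  + coord3 u 2 * (coord3 v 0 * coord3 w 1 - coord3 v 1 * coord3 w 0).
Proof.
rewrite -(det_mx3 (fun i j => coord3 (nth u [:: u; v; w] i) j)) /det3.
by congr (\det _); apply/matrixP => i j; rewrite !mxE coord3_ord.
Qed.

Lemma det3_vec3 (a1 a2 a3 b1 b2 b3 c1 c2 c3 : R) :
  det3 (vec3 a1 a2 a3) (vec3 b1 b2 b3) (vec3 c1 c2 c3) =
  a1 * (b2 * c3 - b3 * c2) - a2 * (b1 * c3 - b3 * c1) + a3 * (b1 * c2 - b2 * c1).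
Proof. by rewrite det3E !coord3_vec3. Qed.

Lemma det3Z (l1 l2 l3 : R) u v w :
  det3 (l1 *: u) (l2 *: v) (l3 *: w) = l1 * l2 * l3 * det3 u v w.
Proof. by rewrite !det3E !coord3Z; ring. Qed.

Lemma det3_mulmx u v w A : det3 (u *m A) (v *m A) (w *m A) = det3 u v w * \det A.
Proof.
rewrite /det3 -det_mulmx; congr (\det _); apply/matrixP => i j; rewrite !mxE.
by case: i => [[|[|[|//]]] ?] /=; rewrite !mxE; apply: eq_bigr => k _; rewrite mxE.
Qed.

Lemma det3_eq0_of_mem u v w x y z : x \in [:: u; v; w] -> y \in [:: u; v; w] ->
  z \in [:: u; v; w] -> det3 u v w = 0 -> det3 x y z = 0.
Proof.
rewrite !inE => /or3P[]/eqP-> /or3P[]/eqP-> /or3P[]/eqP-> D0;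
  first [ by rewrite det3E; ring
        | by rewrite -D0 !det3E; ring
        | by rewrite -oppr0 -D0 !det3E; ring ].
Qed.

Lemma det3_0l v w : det3 0 v w = 0.
Proof. by rewrite det3E /coord3 !mxE; ring. Qed.

Lemma det3_dup12 u w : det3 u u w = 0.
Proof. by rewrite det3E; ring. Qed.

Lemma det3_dup13 u v : det3 u v u = 0.
Proof. by rewrite det3E; ring. Qed.

Lemma det3_dup23 u v : det3 u v v = 0.
Proof. by rewrite det3E; ring. Qed.

Definition cross u v : 'rV[R]_3 :=
  vec3 (coord3 u 1 * coord3 v 2 - coord3 u 2 * coord3 v 1)
       (coord3 u 2 * coord3 v 0 - coord3 u 0 * coord3 v 2)
       (coord3 u 0 * coord3 v 1 - coord3 u 1 * coord3 v 0).

Lemma cross_vec3 (a1 a2 a3 b1 b2 b3 : R) : cross (vec3 a1 a2 a3) (vec3 b1 b2 b3) =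
  vec3 (a2 * b3 - a3 * b2) (a3 * b1 - a1 * b3) (a1 * b2 - a2 * b1).
Proof. by rewrite /cross !coord3_vec3. Qed.

Lemma rank_col_mx2 u v w : det3 u v w != 0 -> \rank (col_mx u v) = 2.
Proof.
move=> D_neq0; apply/eqP/row_freeP.
exists (\matrix_(i < 3, j < 2) (coord3 (nth 0 [:: cross v w; cross w u] j) i / det3 u v w)).
rewrite mul_col_mx (scalar_mx_block 1 1) /block_mx; congr col_mx; apply/rowP => j.
all: rewrite !mxE !big_ord_recl big_ord0 !mxE addr0 !coord3_ord.
all: case: splitP => k /= ->; rewrite ?(ord1 k) !mxE /=.
all: rewrite /cross !coord3_vec3 //= /bump /= ?addn0 ?add1n det3E.
all: by field; rewrite -det3E.
Qed.

Definition same_line x y := exists2 l : R, l != 0 & x = l *: y.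

Lemma same_line_refl x : same_line x x.
Proof. by exists 1; rewrite ?oner_eq0 ?scale1r. Qed.

Lemma same_line_det3_eq0 u v w u' v' w' :
  same_line u u' -> same_line v v' -> same_line w w' ->
  (det3 u v w == 0) = (det3 u' v' w' == 0).
Proof.
move=> [l1 l1_neq0 ->] [l2 l2_neq0 ->] [l3 l3_neq0 ->].
by rewrite det3Z !mulf_eq0 (negbTE l1_neq0) (negbTE l2_neq0) (negbTE l3_neq0).
Qed.

(* Vectors are line coordinates: [det3 x a b = 0] says that x passes through the point
   [cross a b] where a and b meet. *)
Lemma cross_meet x a b c d : cross x (cross (cross a b) (cross c d)) =
  det3 x c d *: cross a b - det3 x a b *: cross c d.
Proof.
rewrite /cross !coord3_vec3 // !det3E.
by apply/rowP => -[[|[|[|//]]] ?]; rewrite !mxE /=; ring.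
Qed.

Lemma same_line_of_cross_eq0 x y : x != 0 -> y != 0 -> cross x y = 0 -> same_line x y.
Proof.
move=> x_neq0 y_neq0 /eqP; rewrite vec3_eq0 !subr_eq0 => /and3P[/eqP c0 /eqP c1 /eqP c2].
have cx i j : (i < 3)%N -> (j < 3)%N -> coord3 x i * coord3 y j = coord3 x j * coord3 y i.
  by case: i j => [|[|[|//]]] [|[|[|//]]] _ _ //; rewrite ?c0 ?c1 ?c2.
have [k k_lt3 yk_neq0] : exists2 k, (k < 3)%N & coord3 y k != 0.
  move: y_neq0; rewrite {1}[y]vec3_coord3 vec3_eq0 !negb_and => /or3P[] yk;
  by [exists 0%N | exists 1%N | exists 2%N].
suff Ex : x = (coord3 x k / coord3 y k) *: y.
  by eexists; last exact: Ex; apply: contraNneq x_neq0 => l0; rewrite Ex l0 scale0r.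
by apply/rowP => j; rewrite mxE !coord3_ord mulrAC -cx ?mulfK.
Qed.

Lemma same_line_meet x a b c d : x != 0 -> det3 x a b = 0 -> det3 x c d = 0 ->
  cross (cross a b) (cross c d) != 0 -> same_line x (cross (cross a b) (cross c d)).
Proof.
move=> x_neq0 xab xcd N_neq0; apply: same_line_of_cross_eq0 => //.
by rewrite cross_meet xab xcd !scale0r subrr.
Qed.

Lemma mulmx_cross3 x u0 u1 u2 (k0 k1 k2 : R) :
  x *m mx3 (fun i j => coord3 (nth 0 [:: k0 *: cross u1 u2; k1 *: cross u2 u0;
                                         k2 *: cross u0 u1] j) i) =
  vec3 (k0 * det3 x u1 u2) (k1 * det3 u0 x u2) (k2 * det3 u0 u1 x).
Proof.
apply/rowP => -[[|[|[|//]]] ?]; rewrite !mxE !big_ord_recl big_ord0 !mxE /=.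
all: by rewrite !coord3_ord !coord3Z /cross !coord3_vec3 // !det3E /bump /= ?addn0 ?add1n; ring.
Qed.

Lemma projective_frame u0 u1 u2 u3 :
  det3 u0 u1 u2 != 0 -> det3 u3 u1 u2 != 0 -> det3 u0 u3 u2 != 0 -> det3 u0 u1 u3 != 0 ->
  exists2 A, A \in unitmx &
    [/\ same_line (u0 *m A) (vec3 1 0 0), same_line (u1 *m A) (vec3 0 1 0),
        same_line (u2 *m A) (vec3 0 0 1) & u3 *m A = vec3 1 1 1].
Proof.
set D := det3 u0 u1 u2; set D0 := det3 u3 u1 u2; set D1 := det3 u0 u3 u2;
set D2 := det3 u0 u1 u3 => D_neq0 D0_neq0 D1_neq0 D2_neq0.
have mulA := mulmx_cross3 _ u0 u1 u2 D0^-1 D1^-1 D2^-1.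
set A := mx3 _ in mulA.
have E0 : u0 *m A = (D / D0) *: vec3 1 0 0.
  by rewrite mulA det3_dup12 det3_dup13 scale_vec3 !mulr0 mulr1 mulrC.
have E1 : u1 *m A = (D / D1) *: vec3 0 1 0.
  by rewrite mulA det3_dup12 det3_dup23 scale_vec3 !mulr0 mulr1 mulrC.
have E2 : u2 *m A = (D / D2) *: vec3 0 0 1.
  by rewrite mulA det3_dup13 det3_dup23 scale_vec3 !mulr0 mulr1 mulrC.
exists A; last by split; [exists (D / D0) | exists (D / D1) | exists (D / D2) |
                          rewrite mulA !mulVf]; rewrite ?mulf_neq0 ?invr_eq0.
have e123 : det3 (vec3 1 0 0) (vec3 0 1 0) (vec3 0 0 1) = 1 :> R.
  by rewrite det3_vec3; ring.
have : det3 (u0 *m A) (u1 *m A) (u2 *m A) != 0.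
  by rewrite E0 E1 E2 det3Z e123 mulr1 !mulf_neq0 ?invr_eq0.
rewrite det3_mulmx mulf_eq0 negb_or => /andP[_].
by rewrite unitmxE unitfE.
Qed.

End Plane.

Section Realizations.
Variables (R : fieldType) (n : nat).
Implicit Types (f g : 'I_n -> 'rV[R]_3) (M : {set {set 'I_n}}).

Lemma mem_matroid_bases f i j k : i != j -> j != k -> i != k ->
  ([set i; j; k] \in matroid_bases f) = (det3 (f i) (f j) (f k) != 0).
Proof.
move=> ij jk ik; have card3 : #|[set i; j; k]| == 3.
  by rewrite setUC cardsU1 cards2 !inE negb_or ij ![k == _]eq_sym ik jk.
rewrite inE card3 /=; apply/existsP/idP => [[i'] | D_neq0]; last first.
  by exists i; apply/existsP; exists j; apply/existsP; exists k; rewrite eqxx.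
case/existsP=> j' /existsP[k' /andP[/eqP E]]; apply: contra => /eqP D0.
have mem x : x \in [set i'; j'; k'] -> f x \in [:: f i; f j; f k].
  by rewrite -E !inE -orbA => /or3P[] /eqP->; rewrite eqxx ?orbT.
by apply/eqP/(det3_eq0_of_mem _ _ _ D0); apply: mem; rewrite !inE eqxx ?orbT.
Qed.

Lemma eq_matroid_bases_det3 f g : matroid_bases f = matroid_bases g ->
  forall i j k, (det3 (f i) (f j) (f k) == 0) = (det3 (g i) (g j) (g k) == 0).
Proof.
move=> Efg i j k.
have [<-|ij] := eqVneq i j; first by rewrite !det3_dup12 eqxx.
have [<-|jk] := eqVneq j k; first by rewrite !det3_dup23 eqxx.
have [<-|ik] := eqVneq i k; first by rewrite !det3_dup13 eqxx.
by apply: negb_inj; rewrite -!mem_matroid_bases // Efg.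
Qed.

Lemma pgl_equiv_sym f g : pgl_equiv f g -> pgl_equiv g f.
Proof.
case=> A [A_unit [c [c_neq0 E]]]; exists (invmx A); split; first by rewrite unitmx_inv.
exists (fun i => (c i)^-1); split => i; first by rewrite invr_neq0.
by rewrite E -scalemxAl scalerA mulVf // scale1r mulmxK.
Qed.

Lemma pgl_equiv_trans f g h : pgl_equiv f g -> pgl_equiv g h -> pgl_equiv f h.
Proof.
case=> A [A_unit [c [c_neq0 E]]] [B [B_unit [d [d_neq0 F]]]].
exists (A *m B); split; first by rewrite unitmx_mul A_unit B_unit.
exists (fun i => d i * c i); split => i; first by rewrite mulf_neq0.
by rewrite F E -scalemxAl scalerA mulmxA.
Qed.

Lemma pgl_equiv_of_same_line f g A : A \in unitmx ->
  (forall i, same_line (f i *m A) (g i)) -> pgl_equiv f g.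
Proof.
move=> A_unit /fin_all_exists2[c c_neq0 E]; exists A; split => //.
exists (fun i => (c i)^-1); split => i; first by rewrite invr_neq0.
by rewrite E scalerA mulVf // scale1r.
Qed.

Lemma realization_space_zero_dim_of_orbits M f m (N : 'I_m -> 'I_n -> 'rV[R]_3) :
  realizes M f -> (forall g, realizes M g -> exists t, pgl_equiv g (N t)) ->
  @realization_space_zero_dim R n M.
Proof.
move=> Mf orbits.
have /fin_all_exists[F FP] : forall t, exists F : 'I_n -> 'rV[R]_3, realizes M F /\
    forall g, realizes M g -> pgl_equiv g (N t) -> pgl_equiv F (N t).
  move=> t.
  have [[g [Mg gN]] | no_g] := classic (exists g, realizes M g /\ pgl_equiv g (N t)).
    by exists g.
  by exists f; split => // g Mg gN; case: no_g; exists g.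
have [t0 _] := orbits f Mf.
exists m, F; split; first exact: leq_ltn_trans (leq0n t0) (ltn_ord t0).
split => [t | g Mg]; first exact: (FP t).1.
have [t gN] := orbits g Mg; exists t.
exact: pgl_equiv_trans ((FP t).2 g Mg gN) (pgl_equiv_sym gN).
Qed.

End Realizations.

Lemma sqrn_neq_double m n : (0 < n -> m ^ 2 != 2 * n ^ 2)%N.
Proof.
move=> n_gt0; apply/eqP => E.
have m_gt0 : (0 < m)%N.
  by rewrite -(ltn_exp2r _ _ (isT : 0 < 2)%N) E exp0n // muln_gt0 expn_gt0 n_gt0.
have := congr1 (logn 2) E.
rewrite lognM ?expn_gt0 ?n_gt0 // !lognX (logn_prime _ (isT : prime 2)) => /(congr1 odd).
by rewrite /= !oddM.
Qed.

Lemma sqr_rat_neq2 (q : rat) : q ^+ 2 != 2.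
Proof.
apply/eqP => q2_eq2.
have : numq q ^+ 2 = 2 * denq q ^+ 2.
  apply: (@intr_inj rat); rewrite rmorphXn rmorphM /= numqE exprMn q2_eq2.
  by rewrite rmorphXn.
move/(congr1 absz); rewrite abszM !abszX /= => /eqP.
by apply/negP/sqrn_neq_double; rewrite absz_gt0 denq_neq0.
Qed.

(* (a, b) stands for a + b sqrt 2. *)
Definition q2 := (rat * rat)%type.

Definition q2_add (x y : q2) : q2 := (x.1 + y.1, x.2 + y.2).
Definition q2_opp (x : q2) : q2 := (- x.1, - x.2).
Definition q2_mul (x y : q2) : q2 := (x.1 * y.1 + 2 * (x.2 * y.2), x.1 * y.2 + x.2 * y.1).

Declare Scope q2_scope.
Delimit Scope q2_scope with q2.
Local Infix "+" := q2_add : q2_scope.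
Local Infix "*" := q2_mul : q2_scope.
Local Notation "x - y" := (q2_add x (q2_opp y)) : q2_scope.

Definition q2vec := (q2 * q2 * q2)%type.

Definition q2_det3 (u v w : q2vec) : q2 :=
  let: (a1, a2, a3) := u in let: (b1, b2, b3) := v in let: (c1, c2, c3) := w in
  (a1 * (b2 * c3 - b3 * c2) - a2 * (b1 * c3 - b3 * c1) + a3 * (b1 * c2 - b2 * c1))%q2.

Section Q2Real.
Variable R : rcfType.

Definition q2R (x : q2) : R := ratr x.1 + ratr x.2 * Num.sqrt 2.

Definition q2vec3 (u : q2vec) : 'rV[R]_3 := vec3 (q2R u.1.1) (q2R u.1.2) (q2R u.2).

Lemma sqrt2_sqr : Num.sqrt (2 : R) ^+ 2 = 2.
Proof. by rewrite sqr_sqrtr // ler0n. Qed.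

Lemma q2R_add x y : q2R (q2_add x y) = q2R x + q2R y.
Proof. by rewrite /q2R /= !rmorphD; ring. Qed.

Lemma q2R_opp x : q2R (q2_opp x) = - q2R x.
Proof. by rewrite /q2R /= !rmorphN; ring. Qed.

Lemma q2R_mul x y : q2R (q2_mul x y) = q2R x * q2R y.
Proof. by rewrite /q2R /= !(rmorphD, rmorphM, rmorph1); ring: sqrt2_sqr. Qed.

Lemma q2R_eq0 x : (q2R x == 0) = (x == (0, 0)).
Proof.
case: x => a b; apply/eqP/eqP => [|[-> ->]]; last by rewrite /q2R /= rmorph0 mul0r addr0.
move=> x0; have : ratr (a ^+ 2 - 2 * b ^+ 2) = q2R (a, - b) * q2R (a, b) :> R.
  by rewrite /q2R /= !(rmorphB, rmorphM, rmorphXn, rmorphN, rmorphD, rmorph1); ring: sqrt2_sqr.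
rewrite x0 mulr0 => /eqP; rewrite fmorph_eq0 subr_eq0 => /eqP sq.
have b0 : b = 0.
  apply/eqP; apply: contraT => b_neq0; have := sqr_rat_neq2 (a / b).
  by rewrite expr_div_n sq mulfK ?eqxx // expf_neq0.
by move: sq; rewrite b0 expr0n mulr0 => /eqP; rewrite expf_eq0 /= => /eqP->.
Qed.

Lemma det3_q2vec3 u v w : det3 (q2vec3 u) (q2vec3 v) (q2vec3 w) = q2R (q2_det3 u v w).
Proof.
case: u v w => [[a1 a2] a3] [[b1 b2] b3] [[c1 c2] c3].
by rewrite det3_vec3 /= !(q2R_add, q2R_mul, q2R_opp).
Qed.

End Q2Real.

Definition L2_q2 : seq q2vec :=
  [:: ((1, 0), (0, 0), (0, 0));
      ((0, 0), (1, 0), (0, 0));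
      ((1, 0), (-1, 0), (0, 0));
      ((1, 0), (1, 0), (-1, 0));
      ((1, 0), (0, 0), (-1, 0));
      ((0, 0), (1, 0), (-1, 0));
      ((1, 0), (0, 0), (1, -1));
      ((0, 0), (1, 0), (-2, 1));
      ((1, 0), (0, 1), (1, -1));
      ((1, 0), (0, 1/2), (0, -1));
      ((1, 0), (1, 1), (0, -1));
      ((1, 0), (-1, 1), (2, -2))].

Definition L2_q2_at (i : nat) : q2vec := nth ((0, 0), (0, 0), (0, 0)) L2_q2 i.

Definition L2_dependent (i j k : nat) : bool :=
  q2_det3 (L2_q2_at i) (L2_q2_at j) (L2_q2_at k) == (0, 0).

Lemma L2_dependent_pair (i j : 'I_12) : i != j -> exists k : 'I_12, ~~ L2_dependent i j k.
Proof.
(* Evaluated over [iota]: enumerating ['I_12] does not reduce efficiently. *)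
have : all (fun i => all (fun j =>
    (i == j) || has (fun k => ~~ L2_dependent i j k) (iota 0 12)) (iota 0 12)) (iota 0 12).
  by vm_compute.
move=> /allP/(_ i)/(_ _)/allP/(_ j); rewrite !mem_iota !ltn_ord => /(_ isT isT).
case/orP => [/eqP/val_inj-> | /hasP[k]]; first by rewrite eqxx.
by rewrite mem_iota => /andP[_ k_lt12] k_indep _; exists (Ordinal k_lt12).
Qed.

Section L2Real.
Variable R : realType.

Lemma L2_list_q2 : L2_list R = map (q2vec3 R) L2_q2.
Proof.
rewrite /L2_list /L2_q2 /=; repeat f_equal; rewrite /q2vec3 /q2R /=; f_equal.
all: by rewrite ?(rmorph0, rmorph1, rmorphN, rmorphM, rmorph_nat, fmorphV); ring.
Qed.

Lemma L2_q2vec3 (i : 'I_12) : L2 R i = q2vec3 R (L2_q2_at i).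
Proof. by rewrite /L2 L2_list_q2 (nth_map ((0, 0), (0, 0), (0, 0))). Qed.

Lemma L2_det3_eq0 (i j k : 'I_12) :
  (det3 (L2 R i) (L2 R j) (L2 R k) == 0) = L2_dependent i j k.
Proof. by rewrite !L2_q2vec3 det3_q2vec3 q2R_eq0. Qed.

Lemma L2_realizes : realizes (matroid_bases (L2 R)) (L2 R).
Proof.
split=> // i j /L2_dependent_pair[k]; rewrite -L2_det3_eq0.
exact: rank_col_mx2.
Qed.

End L2Real.

Local Notation line n := (@Ordinal 12 n isT).

Lemma forall_ord12 (P : 'I_12 -> Prop) :
  P (line 0) -> P (line 1) -> P (line 2) -> P (line 3) -> P (line 4) -> P (line 5) ->
  P (line 6) -> P (line 7) -> P (line 8) -> P (line 9) -> P (line 10) -> P (line 11) ->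
  forall i, P i.
Proof.
move=> P0 P1 P2 P3 P4 P5 P6 P7 P8 P9 P10 P11 [i lt_i12].
by do 12 (case: i lt_i12 => [|i] lt_i12; first by rewrite (bool_irrelevance lt_i12 isT)).
Qed.

Section NormalForm.
Variable R : fieldType.

Definition L2_normal (t : R) (i : 'I_12) : 'rV[R]_3 :=
  nth 0 [:: vec3 1 0 0; vec3 0 1 0; vec3 (-1) (-1) 0; vec3 0 1 1; vec3 0 0 1; vec3 1 1 1;
            vec3 1 0 (1 - t); vec3 1 t 1;
            vec3 (t ^+ 2 - 2 * t) (t ^+ 2 - t) (- t ^+ 3 + 3 * t ^+ 2 - 2 * t);
            vec3 (t ^+ 2 - t - 1) (- t ^+ 3 + 3 * t ^+ 2 - 2 * t) (t - 1);
            vec3 (t ^+ 2 - t - 1) (t ^+ 2 - t) (t - 1);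
            vec3 (1 + t - t ^+ 2) (2 * t - t ^+ 2) 1] i.

Section Normalized.
Variable h : 'I_12 -> 'rV[R]_3.
Hypothesis h_dep : forall i j k : 'I_12, (det3 (h i) (h j) (h k) == 0) = L2_dependent i j k.
Hypotheses (h0 : same_line (h (line 0)) (vec3 1 0 0))
  (h1 : same_line (h (line 1)) (vec3 0 1 0)) (h4 : same_line (h (line 4)) (vec3 0 0 1))
  (h5 : same_line (h (line 5)) (vec3 1 1 1)).

Let h_neq0 i : h i != 0.
Proof.
have [j ij] : exists j, i != j.
  by case: (eqVneq i (line 0)) => [->|]; [exists (line 1) | exists (line 0)].
have [k] := L2_dependent_pair ij; rewrite -h_dep; apply: contraNneq => ->.
by rewrite det3_0l.
Qed.

Let same_line_dep i j k a b c : same_line (h i) a -> same_line (h j) b ->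
  same_line (h k) c -> (det3 a b c == 0) = L2_dependent i j k.
Proof. by move=> ha hb hc; rewrite -(same_line_det3_eq0 ha hb hc) h_dep. Qed.

Let meet_step (i a b c d : 'I_12) A B C D N :
  same_line (h a) A -> same_line (h b) B -> same_line (h c) C -> same_line (h d) D ->
  L2_dependent i a b -> L2_dependent i c d -> cross (cross A B) (cross C D) = N -> N != 0 ->
  same_line (h i) N.
Proof.
move=> hA hB hC hD iab icd <- N_neq0; apply: same_line_meet; rewrite ?h_neq0 //.
  by apply/eqP; rewrite (same_line_dep (same_line_refl _) hA hB).
by apply/eqP; rewrite (same_line_dep (same_line_refl _) hC hD).
Qed.

Let line7_normal :
  exists t, [/\ t != 0, t != 1 & same_line (h (line 7)) (vec3 1 t 1)].
Proof.
have on15 : det3 (h (line 7)) (vec3 0 1 0) (vec3 1 1 1) == 0.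
  by rewrite (same_line_dep (same_line_refl _) h1 h5).
have not01 : det3 (vec3 1 0 0) (vec3 0 1 0) (h (line 7)) != 0.
  by rewrite (same_line_dep h0 h1 (same_line_refl _)).
have not04 : det3 (vec3 1 0 0) (vec3 0 0 1) (h (line 7)) != 0.
  by rewrite (same_line_dep h0 h4 (same_line_refl _)).
have not05 : det3 (vec3 1 0 0) (vec3 1 1 1) (h (line 7)) != 0.
  by rewrite (same_line_dep h0 h5 (same_line_refl _)).
move: on15 not01 not04 not05; rewrite [h _]vec3_coord3 !det3_vec3.
set p := coord3 _ 0; set q := coord3 _ 1; set r := coord3 _ 2.
rewrite !(mul1r, mul0r, mulr1, mulr0, subr0, sub0r, addr0, add0r, mulrN1) subr_eq0 oppr_eq0.
move=> /eqP-> r_neq0 q_neq0 rq_neq0; exists (q / r); split.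
- by rewrite mulf_neq0 ?invr_eq0.
- by apply: contra_neq rq_neq0 => qr1; rewrite -(divfK r_neq0 q) qr1 mul1r subrr.
- by exists r; rewrite // scale_vec3 mulr1 mulrC divfK.
Qed.

Lemma normal_form_of_frame :
  exists t, 2 * t ^+ 2 - 4 * t + 1 = 0 /\ forall i, same_line (h i) (L2_normal t i).
Proof.
have [t [t_neq0 t_neq1 h7]] := line7_normal.
have t1_neq0 : t - 1 != 0 by rewrite subr_eq0.
have tt1_neq0 : t ^+ 2 - t != 0.
  by rewrite (_ : t ^+ 2 - t = t * (t - 1)) ?mulf_neq0 //; ring.
have h3 : same_line (h (line 3)) (vec3 0 1 1).
  apply: (meet_step h0 h5 h1 h4) => //; first by rewrite !cross_vec3; f_equal; ring.
  by rewrite vec3_eq0 oner_eq0 !andbF.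
have h2 : same_line (h (line 2)) (vec3 (-1) (-1) 0).
  apply: (meet_step h0 h1 h4 h5) => //; first by rewrite !cross_vec3; f_equal; ring.
  by rewrite vec3_eq0 oppr_eq0 oner_eq0.
have h6 : same_line (h (line 6)) (vec3 1 0 (1 - t)).
  apply: (meet_step h0 h4 h3 h7) => //; first by rewrite !cross_vec3; f_equal; ring.
  by rewrite vec3_eq0 oner_eq0.
have h11 : same_line (h (line 11)) (vec3 (1 + t - t ^+ 2) (2 * t - t ^+ 2) 1).
  apply: (meet_step h5 h6 h2 h7) => //; first by rewrite !cross_vec3; f_equal; ring.
  by rewrite vec3_eq0 oner_eq0 !andbF.
have h10 : same_line (h (line 10)) (vec3 (t ^+ 2 - t - 1) (t ^+ 2 - t) (t - 1)).
  apply: (meet_step h0 h7 h2 h6) => //; first by rewrite !cross_vec3; f_equal; ring.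
  by rewrite vec3_eq0 (negbTE t1_neq0) !andbF.
have h9 : same_line (h (line 9))
    (vec3 (t ^+ 2 - t - 1) (- t ^+ 3 + 3 * t ^+ 2 - 2 * t) (t - 1)).
  apply: (meet_step h0 h11 h1 h10) => //; first by rewrite !cross_vec3; f_equal; ring.
  by rewrite vec3_eq0 (negbTE t1_neq0) !andbF.
have h8 : same_line (h (line 8))
    (vec3 (t ^+ 2 - 2 * t) (t ^+ 2 - t) (- t ^+ 3 + 3 * t ^+ 2 - 2 * t)).
  apply: (meet_step h1 h6 h5 h10) => //; first by rewrite !cross_vec3; f_equal; ring.
  by rewrite vec3_eq0 (negbTE tt1_neq0) andbF.
exists t; split; last by apply: forall_ord12.
have /eqP : det3 (L2_normal t (line 9)) (L2_normal t (line 4)) (L2_normal t (line 7)) == 0.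
  by rewrite (same_line_dep h9 h4 h7).
rewrite /= det3_vec3 => dep947.
have /eqP : t * (2 * t ^+ 2 - 4 * t + 1) = 0 by rewrite -oppr0 -dep947; ring.
by rewrite mulf_eq0 (negbTE t_neq0) => /eqP.
Qed.

End Normalized.

Lemma L2_normal_form (g : 'I_12 -> 'rV[R]_3) :
  (forall i j k : 'I_12, (det3 (g i) (g j) (g k) == 0) = L2_dependent i j k) ->
  exists t, 2 * t ^+ 2 - 4 * t + 1 = 0 /\ pgl_equiv g (L2_normal t).
Proof.
move=> g_dep.
have indep (i j k : 'I_12) : ~~ L2_dependent i j k -> det3 (g i) (g j) (g k) != 0.
  by rewrite -g_dep.
have [A A_unit [h0 h1 h4 h5]] := projective_frame (indep (line 0) (line 1) (line 4) isT)
  (indep (line 5) (line 1) (line 4) isT) (indep (line 0) (line 5) (line 4) isT)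
  (indep (line 0) (line 1) (line 5) isT).
have detA_neq0 : \det A != 0 by rewrite -unitfE -unitmxE.
have gA_dep i j k : (det3 (g i *m A) (g j *m A) (g k *m A) == 0) = L2_dependent i j k.
  by rewrite det3_mulmx mulf_eq0 (negbTE detA_neq0) orbF g_dep.
have {}h5 : same_line (g (line 5) *m A) (vec3 1 1 1) by rewrite h5; exact: same_line_refl.
have [t [t_root gA_t]] := normal_form_of_frame gA_dep h0 h1 h4 h5.
by exists t; split; last exact: pgl_equiv_of_same_line A_unit gA_t.
Qed.

End NormalForm.

Lemma quadratic_sqrt2_roots (R : rcfType) (t : R) : 2 * t ^+ 2 - 4 * t + 1 = 0 ->
  t = 1 + Num.sqrt 2 / 2 \/ t = 1 - Num.sqrt 2 / 2.
Proof.
have : (2 * (t - 1)) ^+ 2 - Num.sqrt 2 ^+ 2 = 2 * (2 * t ^+ 2 - 4 * t + 1).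
  by rewrite sqrt2_sqr; ring.
move=> /[swap] ->; rewrite mulr0 => /eqP; rewrite subr_eq0 eqf_sqr.
case/orP=> /eqP E; [left; rewrite -E | right; rewrite -[Num.sqrt 2]opprK -E]; by field.
Qed.

Theorem proposition4p5 (R : realType) :
  @realization_space_zero_dim R 12 (matroid_bases (L2 R)).
Proof.
pose roots : seq R := [:: 1 + Num.sqrt 2 / 2; 1 - Num.sqrt 2 / 2].
apply: (realization_space_zero_dim_of_orbits (L2_realizes R)
  (N := fun b : 'I_2 => L2_normal (nth 0 roots b))).
move=> g [_ /eq_matroid_bases_det3 g_dep].
have [t [t_root gN]] :=
  L2_normal_form (fun i j k => etrans (g_dep i j k) (L2_det3_eq0 R i j k)).
case: (quadratic_sqrt2_roots t_root) => t_eq; [exists ord0 | exists ord_max];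
  by rewrite /roots /= -t_eq.
Qed.
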